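(* Let $(R,\mathfrak{m}) \to (S,\mathfrak{n})$ be an extension of Artin local rings such that $S$ is a finite free $R$-module and the induced map of residue fields $R/\mathfrak{m} \to S/\mathfrak{n}$ is an isomorphism. If $R$ has property $\mathcal{B}$, then so does $S$.
   Context: An Artin local ring $R$ has property $\mathcal{B}$ if there exists an integer $c \geq 2$ such that $c$ divides $\ell(M)$ for every finitely generated $R$-module $M$ with bounded Betti numbers (i.e. $\sup_n \ell(\operatorname{Tor}^R_n(M,R/\mathfrak{m})) < \infty$). *)

From HB Require Import structures.
From mathcomp Require Import all_boot all_order all_algebra.
Set Implicit Arguments. Unset Strict Implicit. Unset Printing Implicit Defensive.
Import Order.TTheory GRing.Theory Num.Theory.
Local Open Scope ring_scope.

Definition is_submod (R : comNzRingType) (M : lmodType R) (U : M -> Prop) : Prop :=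
  U 0 /\ forall (a : R) (x y : M), U x -> U y -> U (a *: x + y).

Definition strict_chain (R : comNzRingType) (M : lmodType R)
    (n : nat) (U : nat -> M -> Prop) : Prop :=
  (forall i, (i <= n)%N -> is_submod (U i)) /\
  (forall i, (i < n)%N ->
     (forall x, U i x -> U i.+1 x) /\ exists x, U i.+1 x /\ ~ U i x).

Definition is_length (R : comNzRingType) (M : lmodType R) (n : nat) : Prop :=
  (exists U : nat -> M -> Prop, strict_chain n U) /\
  ~ (exists U : nat -> M -> Prop, strict_chain n.+1 U).

Definition fingen (R : comNzRingType) (M : lmodType R) : Prop :=
  exists (n : nat) (g : 'I_n -> M),
    forall m : M, exists a : 'I_n -> R, m = \sum_(i < n) a i *: g i.

Definition is_ideal (R : comNzRingType) (I : R -> Prop) : Prop :=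
  I 0 /\ forall a x y : R, I x -> I y -> I (a * x + y).

Definition artinian (R : comNzRingType) : Prop :=
  forall I : nat -> R -> Prop,
    (forall n, is_ideal (I n)) ->
    (forall n x, I n.+1 x -> I n x) ->
    exists N, forall n, (N <= n)%N -> forall x, I n x <-> I N x.

(* pi : R -> k is the residue map of a local ring: a surjection onto a
   field whose kernel is the set of non-units (so ker pi is the unique
   maximal ideal and k = R/m). *)
Definition residue_map (R : comNzRingType) (k : fieldType)
    (pi : {rmorphism R -> k}) : Prop :=
  (forall y : k, exists x, pi x = y) /\
  (forall x : R, pi x != 0 -> exists y, x * y = 1).

Definition artin_local (R : comNzRingType) (k : fieldType)
    (pi : {rmorphism R -> k}) : Prop :=
  residue_map pi /\ artinian R.

(* A resolution of M by finitely generated free modules (row vectors,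
   maps acting on the right):
     ... -> R^(rk 2) --dif 1--> R^(rk 1) --dif 0--> R^(rk 0) --aug--> M -> 0 *)
Record free_res (R : comNzRingType) (M : lmodType R) := FreeRes {
  rk : nat -> nat;
  dif : forall n, 'M[R]_(rk n.+1, rk n);
  aug : 'rV[R]_(rk 0) -> M;
  aug_linear : forall (a : R) (u v : 'rV[R]_(rk 0)),
      aug (a *: u + v) = a *: aug u + aug v;
  aug_surj : forall m : M, exists u, aug u = m;
  exact0 : forall u, aug u = 0 <-> exists v, u = v *m dif 0;
  exactn : forall n (u : 'rV[R]_(rk n.+1)),
      u *m dif n = 0 <-> exists v, u = v *m dif n.+1
}.

(* ell_R(Tor_n^R(M,k)) = dim_k H_n(F ⊗_R k), computed from the free
   resolution F: F_n ⊗ k = k^(rk n) with differentials reduced by pi.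
   dim H_n = (rk n - rank(out-going map)) - rank(in-coming map). *)
Definition tor_len (R : comNzRingType) (k : fieldType) (pi : {rmorphism R -> k})
    (M : lmodType R) (F : free_res M) (n : nat) : nat :=
  match n with
  | 0 => (rk F 0 - \rank (map_mx pi (dif F 0)))%N
  | n'.+1 => (rk F n'.+1 - \rank (map_mx pi (dif F n'))
              - \rank (map_mx pi (dif F n'.+1)))%N
  end.

(* M has bounded Betti numbers: sup_n ell(Tor_n(M,k)) < oo
   (Tor computed through some f.g. free resolution; independent of it). *)
Definition bounded_betti (R : comNzRingType) (k : fieldType)
    (pi : {rmorphism R -> k}) (M : lmodType R) : Prop :=
  exists (F : free_res M) (B : nat), forall n, (tor_len pi F n <= B)%N.

Definition propB (R : comNzRingType) (k : fieldType)
    (pi : {rmorphism R -> k}) : Prop :=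
  exists c : nat, (2 <= c)%N /\
    forall M : lmodType R, fingen M -> bounded_betti pi M ->
      forall n, is_length M n -> (c %| n)%N.

Definition finite_free (R S : comNzRingType) (f : {rmorphism R -> S}) : Prop :=
  exists (n : nat) (e : 'I_n -> S),
    (forall s : S, exists a : 'I_n -> R, s = \sum_(i < n) f (a i) * e i) /\
    (forall a : 'I_n -> R, \sum_(i < n) f (a i) * e i = 0 -> forall i, a i = 0).

(* Restricting scalars along f turns an S-module M into an R-module M_R.  As S
   is local with the residue field of R, every scalar of S is congruent to one
   of R modulo the maximal ideal n of S, and n kills each factor of a
   composition series of M; so a composition series of M over S is one over R,
   and l_R(M_R) = l_S(M).  A basis of S over R identifies S^p with R^(pN) and
   turns a free S-resolution of M into a free R-resolution of M_R; a maximal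
   minor of a differential that is invertible modulo n is invertible over S,
   hence stays invertible after restriction, so the Betti numbers of M_R are at
   most N times those of M.  Thus the constant c of property B for R divides
   l_S(M) whenever M has bounded Betti numbers. *)

From HB Require Import structures.
From mathcomp Require Import all_boot all_order all_algebra.
From Stdlib Require Import Classical IndefiniteDescription.
Set Implicit Arguments. Unset Strict Implicit. Unset Printing Implicit Defensive.
Import GRing.Theory.
Local Open Scope ring_scope.

Local Notation "X `<=` Y" := (forall x, X x -> Y x) (at level 70, no associativity).

Section SubmoduleChains.
Variables (R : comNzRingType) (V : lmodType R).
Implicit Types (X Y Z : V -> Prop) (U W : nat -> V -> Prop).

Lemma submod0 X : is_submod X -> X 0.
Proof. by case. Qed.

Lemma submod_lin X a x y : is_submod X -> X x -> X y -> X (a *: x + y).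
Proof. by case=> _; apply. Qed.

Lemma submodZ X a x : is_submod X -> X x -> X (a *: x).
Proof. by move=> hX hx; rewrite -[_ *: _]addr0; apply: submod_lin => //; apply: submod0. Qed.

Lemma submodD X x y : is_submod X -> X x -> X y -> X (x + y).
Proof. by move=> hX hx hy; rewrite -[x]scale1r; apply: submod_lin. Qed.

Lemma submodI X Y : is_submod X -> is_submod Y -> is_submod (fun x => X x /\ Y x).
Proof.
move=> hX hY; split; first by split; apply: submod0.
by move=> a x y [? ?] [? ?]; split; apply: submod_lin.
Qed.

Lemma submod_zero : is_submod (fun x : V => x = 0).
Proof. by split=> // a x y -> ->; rewrite scaler0 addr0. Qed.

Lemma strict_chain_mono n U i j :
  strict_chain n U -> (i <= j <= n)%N -> U i `<=` U j.
Proof.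
move=> [_ hU] /andP[]; elim: j => [|j IH]; first by rewrite leqn0 => /eqP->.
rewrite leq_eqVlt => /orP[/eqP-> //|ij] jn x /IH Ux.
by apply: (proj1 (hU j jn)); apply: Ux => //; apply: ltnW.
Qed.

Lemma strict_chain_prefix n U : strict_chain n.+1 U -> strict_chain n U.
Proof. by case=> hs hU; split=> i hi; [apply: hs; apply: leqW | apply: hU; apply: ltnW]. Qed.

Definition chain_insert U i Z : nat -> V -> Prop :=
  fun j => if (j < i)%N then U j else if j == i then Z else U j.-1.

Lemma strict_chain_insert n U i Z :
  strict_chain n U -> (i <= n.+1)%N -> is_submod Z ->
  ((0 < i)%N -> U i.-1 `<=` Z /\ exists x, Z x /\ ~ U i.-1 x) ->
  ((i <= n)%N -> Z `<=` U i /\ exists x, U i x /\ ~ Z x) ->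
  strict_chain n.+1 (chain_insert U i Z).
Proof.
rewrite /chain_insert => -[hs hU] iN hZ below above; split=> j jn.
  case: ltnP => ji; first by apply: hs; rewrite -ltnS (leq_trans ji).
  case: eqP => // /eqP nji; have {nji ji} : (i < j)%N by rewrite ltn_neqAle eq_sym nji.
  by case: j jn => // j jn _; apply: hs.
case: (ltngtP j.+1 i) => [j1i|ij1|ej]; last by rewrite -ej in below; apply: below.
- by apply: hU; rewrite -ltnS (leq_trans j1i).
- case: (ltngtP j i) => [|ij|eji]; first by rewrite ltnNge -ltnS ij1.
    by case: j ij jn {ij1} => // j _ jn; apply: hU.
  by rewrite -eji in above; apply: above.
Qed.

Definition length_le X k := forall m U,
  strict_chain m U -> (forall i, (i <= m)%N -> U i `<=` X) -> (m <= k)%N.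

Lemma length_le0 X : (forall x, X x -> x = 0) -> length_le X 0.
Proof.
move=> X0 [|m] U [hs hU] UX //.
have [_ [x [Ux nUx]]] := hU 0%N (ltn0Sn m).
by exfalso; apply: nUx; rewrite (X0 x (UX 1%N (ltn0Sn m) x Ux)); apply: submod0; apply: hs.
Qed.

(* Y/X is zero or simple: it is generated by the class of any y in Y outside X. *)
Definition simple_factor X Y :=
  forall y, Y y -> ~ X y -> forall x, Y x -> exists r : R, X (x - r *: y).

Section SimpleFactor.
Variables X Y : V -> Prop.
Hypotheses (hX : is_submod X) (hXY : simple_factor X Y).

Lemma simple_factor_meet A B :
  is_submod A -> is_submod B -> A `<=` B -> B `<=` Y ->
  (exists y, A y /\ ~ X y) -> (exists x, B x /\ ~ A x) ->
  exists x, [/\ B x, X x & ~ A x].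
Proof.
move=> hA hB AB BY [y [Ay nXy]] [x0 [Bx0 nAx0]].
have [r Xx] := hXY (BY y (AB y Ay)) nXy (BY x0 Bx0).
exists (x0 - r *: y); split => //.
  by rewrite -scaleNr addrC; apply: submod_lin => //; apply: AB.
move=> Ax; apply: nAx0; rewrite -(subrK (r *: y) x0).
by apply: submodD => //; apply: submodZ.
Qed.

(* Intersecting with X loses at most one strict step of a chain in Y. *)
Lemma chain_meet m U :
  strict_chain m.+1 U -> (forall i, (i <= m.+1)%N -> U i `<=` Y) ->
  exists W, [/\ strict_chain m W, forall i, (i <= m)%N -> W i `<=` X
              & W m `<=` U m.+1].
Proof.
elim: m => [|m IH] hU UY.
  exists (fun _ x => U 1%N x /\ X x); split=> // [|i _ x []//|x []//].
  by split=> // i _; apply: submodI => //; apply: (proj1 hU).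
have Um1m2 : U m.+1 `<=` U m.+2 by apply: (strict_chain_mono hU); rewrite leqnSn leqnn.
have [UX|nUX] := classic (U m.+1 `<=` X).
  exists U; split=> //; first exact: strict_chain_prefix.
  by move=> i im x Ux; apply: UX; apply: (strict_chain_mono hU _ Ux); rewrite im leqnSn.
have [y nUy] := not_all_ex_not _ _ nUX; have [Uy nXy] := imply_to_and _ _ nUy.
have [W [hW WX WU]] := IH (strict_chain_prefix hU) (fun i im => UY i (leqW im)).
pose Z x := U m.+2 x /\ X x.
have [x [Ux Xx nUx]] : exists x, [/\ U m.+2 x, X x & ~ U m.+1 x].
  apply: simple_factor_meet => //; try by apply: (proj1 hU).
  - exact: UY.
  - by exists y.
  - exact: (proj2 ((proj2 hU) m.+1 (ltnSn _))).
exists (chain_insert W m.+1 Z); split.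
- apply: strict_chain_insert => //; first by apply: submodI => //; apply: (proj1 hU).
    move=> _; split=> [z Wz|]; first by split; [apply: Um1m2; apply: WU | apply: (WX m)].
    by exists x; split=> // /WU.
  by rewrite ltnn.
- move=> i im; rewrite /chain_insert; case: ltnP => [/WX//|mi].
  by rewrite eqn_leq im mi => z [].
- by rewrite /chain_insert ltnn eqxx => z [].
Qed.

Lemma length_le_simple_factor k : length_le X k -> length_le Y k.+1.
Proof.
move=> lenX [|m] U hU UY //.
by have [W [hW WX _]] := chain_meet hU UY; apply: lenX hW WX.
Qed.

End SimpleFactor.

Lemma composition_length_le n U :
  strict_chain n U -> (forall x, U 0%N x -> x = 0) ->
  (forall i, (i < n)%N -> simple_factor (U i) (U i.+1)) -> length_le (U n) n.
Proof.
move=> hU U0 simpleU; suff: forall i, (i <= n)%N -> length_le (U i) i by apply.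
elim=> [_|i IH ilt]; first exact: length_le0.
apply: (length_le_simple_factor (X := U i)); last exact: IH (ltnW ilt).
  by apply: (proj1 hU); apply: ltnW.
exact: simpleU.
Qed.

Section MaximalChain.
Variables (n : nat) (U : nat -> V -> Prop).
Hypotheses (hU : strict_chain n U) (Umax : ~ exists W, strict_chain n.+1 W).

Lemma maximal_chain_bottom x : U 0%N x -> x = 0.
Proof.
move=> Ux; apply: NNPP => nx0; apply: Umax.
exists (chain_insert U 0 (fun z => z = 0)); apply: strict_chain_insert => //.
- exact: submod_zero.
- by move=> _; split=> [z ->|]; [apply: submod0; apply: (proj1 hU) | exists x].
Qed.

Lemma maximal_chain_top x : U n x.
Proof.
apply: NNPP => nUx; apply: Umax.
exists (chain_insert U n.+1 (fun _ => True)); apply: strict_chain_insert => //.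
- by move=> _; split=> //; exists x.
- by rewrite ltnn.
Qed.

Lemma maximal_chain_simple i : (i < n)%N -> simple_factor (U i) (U i.+1).
Proof.
move=> ilt y Uy nUy x Ux; apply: NNPP => nx; apply: Umax.
have hUi : is_submod (U i) by apply: (proj1 hU); apply: ltnW.
have hUi1 : is_submod (U i.+1) by apply: (proj1 hU).
pose Z z := U i.+1 z /\ exists s, U i (z - s *: y).
exists (chain_insert U i.+1 Z); apply: strict_chain_insert => //; first exact: leqW.
- split; first by split; [exact: submod0 | exists 0; rewrite scale0r subr0; exact: submod0].
  move=> a u v [Uu [s1 hs1]] [Uv [s2 hs2]]; split; first exact: submod_lin.
  exists (a * s1 + s2).
  have -> : a *: u + v - (a * s1 + s2) *: y = a *: (u - s1 *: y) + (v - s2 *: y).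
    by rewrite scalerDl -scalerA scalerBr opprD addrACA.
  exact: submod_lin.
- move=> _; split=> [z Uz|].
    split; first by apply: (strict_chain_mono hU _ Uz); rewrite leqnSn ilt.
    by exists 0; rewrite scale0r subr0.
  exists y; split=> //; split=> //.
  by exists 1; rewrite scale1r subrr; apply: submod0.
- by move=> _; split=> [z []//|]; exists x; split=> // -[].
Qed.

End MaximalChain.

End SubmoduleChains.

Section ScalarRestriction.
Variables (R S : comNzRingType).

Definition restrict_scalars (f : {rmorphism R -> S}) (M : lmodType S) : Type := M.

Variables (f : {rmorphism R -> S}) (M : lmodType S).

HB.instance Definition _ := GRing.Zmodule.on (restrict_scalars f M).

Definition restrict_scale (a : R) (x : restrict_scalars f M) : restrict_scalars f M :=
  f a *: (x : M).

Fact restrict_scaleA a b x : restrict_scale a (restrict_scale b x) = restrict_scale (a * b) x.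
Proof. by rewrite /restrict_scale scalerA rmorphM. Qed.

Fact restrict_scale1 : left_id 1 restrict_scale.
Proof. by move=> x; rewrite /restrict_scale rmorph1 scale1r. Qed.

Fact restrict_scaleDr : right_distributive restrict_scale +%R.
Proof. by move=> a x y; rewrite /restrict_scale scalerDr. Qed.

Fact restrict_scaleDl x : {morph restrict_scale^~ x : a b / a + b}.
Proof. by move=> a b; rewrite /restrict_scale rmorphD scalerDl. Qed.

HB.instance Definition _ := GRing.Zmodule_isLmodule.Build R (restrict_scalars f M)
  restrict_scaleA restrict_scale1 restrict_scaleDr restrict_scaleDl.

Lemma restrict_scaleE a (x : restrict_scalars f M) : a *: x = f a *: (x : M).
Proof. by []. Qed.

Lemma restrict_submod (X : M -> Prop) :
  is_submod X -> is_submod (X : restrict_scalars f M -> Prop).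
Proof. by case=> X0 Xlin; split=> // a x y; apply: Xlin. Qed.

Lemma restrict_strict_chain n (U : nat -> M -> Prop) :
  strict_chain n U -> strict_chain n (U : nat -> restrict_scalars f M -> Prop).
Proof. by case=> hs hU; split=> // i /hs; apply: restrict_submod. Qed.

End ScalarRestriction.

Section RestrictLength.
Variables (R S : comNzRingType) (kS : fieldType).
Variables (piS : {rmorphism S -> kS}) (f : {rmorphism R -> S}).
Hypothesis S_local : forall s, piS s != 0 -> exists w, s * w = 1.
Hypothesis residue_lift : forall s, exists r, piS (s - f r) = 0.
Variable M : lmodType S.
Local Notation MR := (restrict_scalars f M).

(* The maximal ideal kills Y/X (as 1 - s t is a unit), and modulo it every
   scalar of S comes from R. *)
Lemma simple_factor_restrict (X Y : M -> Prop) :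
  is_submod X -> is_submod Y -> simple_factor X Y -> simple_factor (X : MR -> Prop) Y.
Proof.
move=> hX hY hXY y Yy nXy.
have Xty t : piS t = 0 -> X (t *: y).
  move=> t0; apply: NNPP => nXty.
  have [s Xs] := hXY _ (submodZ t hY Yy) nXty y Yy.
  have [w hw] : exists w, (1 - s * t) * w = 1.
    by apply: S_local; rewrite rmorphB rmorph1 rmorphM t0 mulr0 subr0 oner_neq0.
  have ys : y - s *: (t *: y) = (1 - s * t) *: y by rewrite scalerBl scale1r scalerA.
  apply: nXy; have -> : y = w *: (y - s *: (t *: y)) by rewrite ys scalerA mulrC hw scale1r.
  exact: submodZ.
move=> x Yx; have [s Xs] := hXY y Yy nXy x Yx.
have [r r0] := residue_lift s.
exists r; rewrite restrict_scaleE.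
have -> : x - f r *: y = (x - s *: y) + (s - f r) *: y by rewrite scalerBl addrA subrK.
exact: submodD (Xty _ r0).
Qed.

Lemma is_length_restrict n : is_length M n -> is_length MR n.
Proof.
move=> [[U hU] Umax]; split; first by exists U; apply: restrict_strict_chain.
have hs := proj1 hU.
have simpleU i : (i < n)%N -> simple_factor (U i : MR -> Prop) (U i.+1).
  move=> ilt; have Usimple := maximal_chain_simple hU Umax ilt.
  exact: simple_factor_restrict (hs i (ltnW ilt)) (hs i.+1 ilt) Usimple.
have U0 : forall x : MR, U 0%N x -> x = 0 := maximal_chain_bottom hU Umax.
have lenU := composition_length_le (restrict_strict_chain f hU) U0 simpleU.
case=> W hW; have := lenU n.+1 W hW (fun i _ x _ => maximal_chain_top hU Umax x).
by rewrite ltnn.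
Qed.

End RestrictLength.

Lemma unitmx_minor (F : fieldType) p q (A : 'M[F]_(p, q)) :
  exists (g : 'I_(\rank A) -> 'I_p) (h : 'I_(\rank A) -> 'I_q), mxsub g h A \in unitmx.
Proof.
pose B := rowsub (maxrankfun A) A.
have Bt_full : row_full B^T by rewrite /row_full mxrank_tr; exact: maxrowsub_free.
exists (maxrankfun A), (fullrankfun Bt_full).
have -> : mxsub (maxrankfun A) (fullrankfun Bt_full) A = (rowsub (fullrankfun Bt_full) B^T)^T.
  by apply/matrixP => i j; rewrite !mxE.
by rewrite unitmx_tr fullrowsub_unit.
Qed.

Lemma fingen_linear_surj (R : comNzRingType) (V : lmodType R) m
    (T : {linear 'rV[R]_m -> V}) :
  (forall v, exists u, T u = v) -> fingen V.
Proof.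
move=> T_surj; exists m, (fun k => T (delta_mx 0 k)) => v.
have [u <-] := T_surj v; exists (fun k => u 0 k).
by rewrite {1}(row_sum_delta u) linear_sum; apply: eq_bigr => k _; rewrite linearZ.
Qed.

Section FreeBasis.
Variables (R S : comNzRingType) (f : {rmorphism R -> S}) (N : nat) (e : 'I_N -> S).
Hypothesis e_span : forall s, exists a : 'I_N -> R, s = \sum_i f (a i) * e i.
Hypothesis e_free : forall a : 'I_N -> R, \sum_i f (a i) * e i = 0 -> forall i, a i = 0.

Definition coord (s : S) : 'I_N -> R :=
  proj1_sig (constructive_indefinite_description _ (e_span s)).

Lemma coordK s : \sum_i f (coord s i) * e i = s.
Proof. by rewrite -(proj2_sig (constructive_indefinite_description _ (e_span s))). Qed.

Lemma coord_sum (a : 'I_N -> R) i : coord (\sum_j f (a j) * e j) i = a i.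
Proof.
set s := \sum_j _; apply/eqP; rewrite -subr_eq0; apply/eqP.
apply: (e_free (a := fun j => coord s j - a j)).
under eq_bigr do rewrite rmorphB mulrBl.
by rewrite sumrB coordK subrr.
Qed.

(* A row of R^(p N) is read as the p x N matrix of coordinates, in the basis e,
   of a row of S^p. *)
Definition of_coords p (u : 'rV[R]_(p * N)) : 'rV[S]_p :=
  \row_j \sum_i f (vec_mx u j i) * e i.

Definition coords p (w : 'rV[S]_p) : 'rV[R]_(p * N) :=
  mxvec (\matrix_(j, i) coord (w 0 j) i).

Lemma coordsK p : cancel (@coords p) (@of_coords p).
Proof.
move=> w; apply/rowP => j; rewrite mxE mxvecK -[RHS]coordK.
by apply: eq_bigr => i _; rewrite mxE.
Qed.

Lemma of_coordsK p : cancel (@of_coords p) (@coords p).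
Proof.
move=> u; rewrite /coords -[RHS]vec_mxK; congr mxvec; apply/matrixP => j i.
by rewrite !mxE coord_sum mxE.
Qed.

Lemma of_coords_inj p : injective (@of_coords p).
Proof. exact: can_inj (@of_coordsK p). Qed.

Lemma of_coords_lin p a (u v : 'rV[R]_(p * N)) :
  of_coords (a *: u + v) = f a *: of_coords u + of_coords v.
Proof.
apply/rowP => j; rewrite !mxE mulr_sumr -big_split; apply: eq_bigr => i _ /=.
by rewrite linearD linearZ /= !mxE rmorphD rmorphM mulrDl mulrA.
Qed.

Lemma of_coords0 p : of_coords (0 : 'rV[R]_(p * N)) = 0.
Proof. by apply/rowP => j; rewrite !mxE big1 // => i _; rewrite linear0 mxE rmorph0 mul0r. Qed.

Lemma coords_lin p a (w w' : 'rV[S]_p) : coords (f a *: w + w') = a *: coords w + coords w'.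
Proof. by apply: of_coords_inj; rewrite of_coords_lin !coordsK. Qed.

Definition restrict_map p q (D : 'M[S]_(p, q)) (u : 'rV[R]_(p * N)) : 'rV[R]_(q * N) :=
  coords (of_coords u *m D).

Fact restrict_map_is_linear p q (D : 'M[S]_(p, q)) : linear (restrict_map D).
Proof. by move=> a u v; rewrite /restrict_map of_coords_lin mulmxDl -scalemxAl coords_lin. Qed.

HB.instance Definition _ p q (D : 'M[S]_(p, q)) :=
  GRing.isLinear.Build R _ _ _ (restrict_map D) (restrict_map_is_linear D).

Definition restrict_mx p q (D : 'M[S]_(p, q)) : 'M[R]_(p * N, q * N) :=
  lin1_mx (restrict_map D).

Lemma of_coords_mul p q (D : 'M[S]_(p, q)) u :
  of_coords (u *m restrict_mx D) = of_coords u *m D.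
Proof. by rewrite mul_rV_lin1 /= /restrict_map coordsK. Qed.

Lemma restrict_mxM p q r (D1 : 'M[S]_(p, q)) (D2 : 'M[S]_(q, r)) :
  restrict_mx (D1 *m D2) = restrict_mx D1 *m restrict_mx D2.
Proof.
apply/row_matrixP => i; rewrite !rowE; apply: of_coords_inj.
by rewrite mulmxA !of_coords_mul mulmxA.
Qed.

Lemma restrict_mx1 p : restrict_mx (1%:M : 'M[S]_p) = 1%:M.
Proof.
apply/row_matrixP => i; rewrite !rowE; apply: of_coords_inj.
by rewrite of_coords_mul !mulmx1.
Qed.

Lemma fingen_restrict (M : lmodType S) : fingen M -> fingen (restrict_scalars f M).
Proof.
case=> n [g g_span].
pose T (u : 'rV[R]_(n * N)) : restrict_scalars f M := \sum_(j < n) of_coords u 0 j *: g j.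
have T_lin : linear T.
  move=> a u v; rewrite /T restrict_scaleE scaler_sumr -big_split; apply: eq_bigr => j _ /=.
  by rewrite of_coords_lin !mxE scalerDl scalerA.
apply: (fingen_linear_surj (T := HB.pack T (GRing.isLinear.Build _ _ _ _ T T_lin))).
move=> m; have [a ->] := g_span m; exists (coords (\row_j a j)).
by rewrite /= /T coordsK; apply: eq_bigr => j _; rewrite mxE.
Qed.

Section RestrictResolution.
Variables (M : lmodType S) (F : free_res M).
Local Notation MR := (restrict_scalars f M).

Definition restrict_aug (u : 'rV[R]_(rk F 0 * N)) : MR :=
  aug (of_coords u : 'rV_(rk F 0)).

Lemma restrict_aug_linear a u v :
  restrict_aug (a *: u + v) = a *: restrict_aug u + restrict_aug v.
Proof. by rewrite /restrict_aug of_coords_lin aug_linear. Qed.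

Lemma restrict_aug_surj (m : MR) : exists u, restrict_aug u = m.
Proof. by have [w <-] := aug_surj F m; exists (coords w); rewrite /restrict_aug coordsK. Qed.

Lemma restrict_exact0 u : restrict_aug u = 0 <-> exists v, u = v *m restrict_mx (dif F 0).
Proof.
split=> [u0 | [v ->]]; last first.
  by apply: (exact0 (of_coords _)).2; exists (of_coords v); rewrite of_coords_mul.
have [v hv] := (exact0 (of_coords u)).1 u0.
by exists (coords v); apply: of_coords_inj; rewrite of_coords_mul coordsK.
Qed.

Lemma restrict_exactn n (u : 'rV[R]_(rk F n.+1 * N)) :
  u *m restrict_mx (dif F n) = 0 <-> exists v, u = v *m restrict_mx (dif F n.+1).
Proof.
split=> [u0 | [v ->]]; last first.
  apply: of_coords_inj; rewrite !of_coords_mul of_coords0; apply/exactn.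
  by exists (of_coords v).
have /exactn[v hv] : of_coords u *m dif F n = 0 by rewrite -of_coords_mul u0 of_coords0.
by exists (coords v); apply: of_coords_inj; rewrite of_coords_mul coordsK.
Qed.

Definition restrict_res : free_res MR :=
  FreeRes restrict_aug_linear restrict_aug_surj restrict_exact0 restrict_exactn.

End RestrictResolution.

Section ResidueField.
Variables (kR kS : fieldType) (piR : {rmorphism R -> kR}) (piS : {rmorphism S -> kS}).
Hypothesis S_local : forall s, piS s != 0 -> exists w, s * w = 1.

Lemma rinv_of_residue_det n (P : 'M[S]_n) : piS (\det P) != 0 -> exists Q, P *m Q = 1%:M.
Proof.
move=> /S_local[w hw]; exists (w *: \adj P).
by rewrite -scalemxAr mul_mx_adj scale_scalar_mx mulrC hw.
Qed.

Lemma rank_restrict_rinv n (P Q : 'M[S]_n) :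
  P *m Q = 1%:M -> (n * N <= \rank (map_mx piR (restrict_mx P)))%N.
Proof.
move=> PQ; have := mxrankM_maxl (map_mx piR (restrict_mx P)) (map_mx piR (restrict_mx Q)).
by rewrite -map_mxM -restrict_mxM PQ restrict_mx1 map_mx1 mxrank1.
Qed.

Lemma rank_restrict_mx p q (D : 'M[S]_(p, q)) :
  (N * \rank (map_mx piS D) <= \rank (map_mx piR (restrict_mx D)))%N.
Proof.
have [g [h minor_unit]] := unitmx_minor (map_mx piS D).
have [Q PQ] : exists Q, mxsub g h D *m Q = 1%:M.
  apply: rinv_of_residue_det; rewrite -det_map_mx -unitfE -unitmxE.
  suff -> : map_mx piS (mxsub g h D) = mxsub g h (map_mx piS D) by [].
  by apply/matrixP => i j; rewrite !mxE.
rewrite mulnC (leq_trans (rank_restrict_rinv PQ)) //.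
have -> : mxsub g h D = rowsub g 1%:M *m D *m colsub h 1%:M.
  by apply/matrixP => i j; rewrite -rowsubE mulmx_colsub mulmx1 !mxE.
rewrite !restrict_mxM !map_mxM.
by rewrite (leq_trans (mxrankM_maxl _ _)) // mxrankM_maxr.
Qed.

Lemma tor_len_restrict (M : lmodType S) (F : free_res M) n :
  (tor_len piR (restrict_res F) n <= N * tor_len piS F n)%N.
Proof.
rewrite mulnC; case: n => [|n] /=; rewrite !mulnBl.
  by rewrite leq_sub2l // mulnC rank_restrict_mx.
by rewrite leq_sub // ?leq_sub2l // mulnC rank_restrict_mx.
Qed.

Lemma bounded_betti_restrict (M : lmodType S) :
  bounded_betti piS M -> bounded_betti piR (restrict_scalars f M).
Proof.
case=> F [B FB]; exists (restrict_res F), (N * B)%N => n.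
by rewrite (leq_trans (tor_len_restrict F n)) // leq_mul2l FB orbT.
Qed.

End ResidueField.

End FreeBasis.

Theorem proposition7p2 (R S : comNzRingType) (kR kS : fieldType)
    (piR : {rmorphism R -> kR}) (piS : {rmorphism S -> kS})
    (f : {rmorphism R -> S}) :
  artin_local piR -> artin_local piS ->
  injective f -> finite_free f ->
  (exists phi : kR -> kS, bijective phi /\ forall x : R, phi (piR x) = piS (f x)) ->
  propB piR -> propB piS.
Proof.
move=> [[piR_surj _] _] [[_ S_local] _] _ [N [e [e_span e_free]]].
move=> [phi [[phi_inv _ phi_invK] phi_piR]] [c [c_ge2 c_div]].
have residue_lift s : exists r, piS (s - f r) = 0.
  have [r r_lift] := piR_surj (phi_inv (piS s)).
  by exists r; rewrite rmorphB -phi_piR r_lift phi_invK subrr.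
exists c; split=> // M M_fg M_bb n M_len.
exact (c_div _ (fingen_restrict e_span M_fg)
  (bounded_betti_restrict e_span e_free piR S_local M_bb) n
  (is_length_restrict S_local residue_lift M_len)).
Qed.
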